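(* Let $n = p^l$ where $p$ is prime and $l$ is a positive integer, and let $G$ be a subgroup of $U(n)$. Then for every $\vec v \in S(n)$, $\lambda(G)$ divides $\#\mathrm{Orb}(G;\vec v)$.
   Context: $U(n)$ is the group (under matrix multiplication) of $2\times 2$ matrices $\begin{bmatrix} a & b \\ 0 & 1\end{bmatrix}$ with $a \in (\mathbb{Z}/n\mathbb{Z})^\times$ and $b \in \mathbb{Z}/n\mathbb{Z}$. $S(n)$ is the set of column vectors $\begin{bmatrix} j \\ 1\end{bmatrix}$ with $j \in \mathbb{Z}/n\mathbb{Z}$, on which $U(n)$ acts by matrix–vector multiplication: $\begin{bmatrix} a & b \\ 0 & 1\end{bmatrix}\begin{bmatrix} j \\ 1\end{bmatrix} = \begin{bmatrix} aj+b \\ 1\end{bmatrix}$. $\mathrm{Orb}(G;\vec v)$ is the orbit of $\vec v$ under $G$, and $\#X$ is the cardinality of $X$. $\lambda(G)$ is the minimum of $\#\mathrm{Orb}(G;\vec v)$ over $\vec v \in S(n)$. *)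

From mathcomp Require Import all_boot all_order all_algebra all_fingroup.
Set Implicit Arguments. Unset Strict Implicit. Unset Printing Implicit Defensive.
Import GRing.Theory.
Local Open Scope ring_scope.

Definition i0 : 'I_2 := @ord0 1.
Definition i1 : 'I_2 := @ord_max 1.

(* U(n): invertible 2x2 matrices over Z/nZ of the form [a b; 0 1]
   (such a matrix is invertible iff a is a unit, since its determinant is a). *)
Definition Umat (n : nat) : {set {'GL_2['Z_n]}} :=
  [set g : {'GL_2['Z_n]} | (GLval g i1 i0 == 0) && (GLval g i1 i1 == 1)].

Definition Svec (n : nat) : {set 'cV['Z_n]_2} :=
  [set v : 'cV['Z_n]_2 | v i1 ord0 == 1].

Definition Orb (n : nat) (G : {set {'GL_2['Z_n]}}) (v : 'cV['Z_n]_2)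
  : {set 'cV['Z_n]_2} :=
  [set (@GLval 2 _ g *m v) | g in G].

Definition e1 (n : nat) : 'cV['Z_n]_2 := \col_i (if i == i1 then 1 else 0).

Definition lambda (n : nat) (G : {set {'GL_2['Z_n]}}) : nat :=
  #|Orb G [arg min_(v < e1 n in Svec n) #|Orb G v|]|.

(* The group acts on S(n) = Z/nZ by the affine maps j |-> a j + b, so by
   orbit-stabiliser it suffices to show that every stabiliser order divides the
   largest one; an element of a stabiliser is determined by its scale a.
   If some g in G has a - 1 invertible, g fixes a point x0, and correcting any
   h in G by a suitable power of the translation g h g^-1 h^-1 gives a
   scale-preserving morphism from G into the stabiliser of x0; it embeds every
   stabiliser into that of x0, which is thus the largest and a multiple of all
   the others.  Otherwise every scale is 1 modulo p, hence a^(p^l) = 1, so all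
   stabilisers are p-groups and their orders, powers of p, divide one another. *)

From mathcomp Require Import all_boot all_order all_algebra all_fingroup all_solvable.
From mathcomp Require Import ring.
Set Implicit Arguments. Unset Strict Implicit. Unset Printing Implicit Defensive.
Import GRing.Theory.
Local Open Scope ring_scope.

Section OneModulo.
Variable R : comPzRingType.

Lemma expr_1mod (q x c : R) i : x = 1 + q * c -> exists d, x ^+ i = 1 + q * d.
Proof.
move=> ->; elim: i => [|i [d IHd]]; first by exists 0; rewrite expr0 mulr0 addr0.
by exists (d + c + q * d * c); rewrite exprS IHd; ring.
Qed.

Lemma sum_expr_1mod (q x c : R) m : x = 1 + q * c ->
  exists d, \sum_(i < m) x ^+ i = m%:R + q * d.
Proof.
move=> Ex; elim: m => [|m [d IHd]]; first by exists 0; rewrite big_ord0 mulr0 addr0.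
have [e Ee] := expr_1mod m Ex.
by exists (d + e); rewrite big_ord_recr /= IHd Ee -natr1; ring.
Qed.

Lemma exprp_1mod_lift (p k : nat) (x c : R) : x = 1 + (p ^ k.+1)%:R * c ->
  exists d, x ^+ p = 1 + (p ^ k.+2)%:R * d.
Proof.
move=> Ex; have [d Ed] := sum_expr_1mod p Ex.
have Ex1 : x - 1 = (p ^ k.+1)%:R * c by rewrite Ex; ring.
exists (c * (1 + (p ^ k)%:R * d)).
by rewrite -(subrK 1 (x ^+ p)) subrX1 Ed Ex1 !expnS !natrM; ring.
Qed.

Lemma exprpX_1mod (p m : nat) (x c : R) : x = 1 + p%:R * c ->
  exists d, x ^+ (p ^ m) = 1 + (p ^ m.+1)%:R * d.
Proof.
move=> Ex; elim: m => [|m [d IHd]]; first by exists c; rewrite expn0 expr1 expn1.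
by rewrite expnSr exprM; apply: exprp_1mod_lift IHd.
Qed.

End OneModulo.

Lemma ord2_cases (i : 'I_2) : i = i0 \/ i = i1.
Proof. by case: i => [[|[|i]] lti]; [left|right|done]; apply: val_inj. Qed.

Lemma sum_ord2 (R : nmodType) (F : 'I_2 -> R) : \sum_(i < 2) F i = F i0 + F i1.
Proof.
rewrite big_ord_recr big_ord_recr big_ord0 /= add0r.
by congr (F _ + F _); apply: val_inj.
Qed.

Section AffineAction.
Variable n : nat.
Implicit Types (g h : {'GL_2['Z_n]}) (v w : 'cV['Z_n]_2).

(* An element [a b; 0 1] of U(n) acts on S(n) as the affine map j |-> a j + b. *)
Definition uscale g : 'Z_n := GLval g i0 i0.
Definition ushift g : 'Z_n := GLval g i0 i1.

Lemma UmatP g : g \in Umat n -> GLval g i1 i0 = 0 /\ GLval g i1 i1 = 1.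
Proof. by rewrite inE => /andP[/eqP -> /eqP ->]. Qed.

Lemma uscaleM g h : g \in Umat n -> h \in Umat n ->
  uscale (g * h)%g = uscale g * uscale h.
Proof.
move=> /UmatP[g10 g11] /UmatP[h10 h11].
by rewrite /uscale GL_MxE mxE sum_ord2 h10 mulr0 addr0.
Qed.

Lemma ushiftM g h : g \in Umat n -> h \in Umat n ->
  ushift (g * h)%g = uscale g * ushift h + ushift g.
Proof.
move=> /UmatP[g10 g11] /UmatP[h10 h11].
by rewrite /uscale /ushift GL_MxE mxE sum_ord2 h11 mulr1.
Qed.

Lemma uscale1 : uscale 1%g = 1. Proof. by rewrite /uscale GL_1E mxE. Qed.
Lemma ushift1 : ushift 1%g = 0. Proof. by rewrite /ushift GL_1E mxE. Qed.

Lemma eq_Umat g h : g \in Umat n -> h \in Umat n ->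
  uscale g = uscale h -> ushift g = ushift h -> g = h.
Proof.
move=> /UmatP[g10 g11] /UmatP[h10 h11] Ea Eb; apply: val_inj; apply/matrixP => i j.
by case: (ord2_cases i) => ->; case: (ord2_cases j) => ->; rewrite ?g10 ?g11 ?h10 ?h11.
Qed.

Lemma SvecP v : v \in Svec n -> v i1 0 = 1.
Proof. by rewrite inE => /eqP. Qed.

Lemma eq_Svec v w : v \in Svec n -> w \in Svec n -> v i0 0 = w i0 0 -> v = w.
Proof.
move=> /SvecP v1 /SvecP w1 Ev; apply/matrixP => i j; rewrite [j]ord1.
by case: (ord2_cases i) => ->; rewrite ?v1 ?w1.
Qed.

Lemma mulmx_Svec g v : g \in Umat n -> v \in Svec n ->
  (GLval g *m v) i0 0 = uscale g * v i0 0 + ushift g.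
Proof.
by move=> /UmatP[_ _] /SvecP v1; rewrite mxE sum_ord2 v1 mulr1.
Qed.

Lemma Svec_mulmx g v : g \in Umat n -> v \in Svec n -> GLval g *m v \in Svec n.
Proof.
by move=> /UmatP[g10 g11] /SvecP v1; rewrite inE mxE sum_ord2 g10 g11 v1 mul0r add0r mulr1.
Qed.

(* Group actions in mathcomp act on the right, hence the inverse. *)
Definition mxact v g := GLval (g^-1)%g *m v.

Lemma mxact1 : mxact^~ 1%g =1 id.
Proof. by move=> v; rewrite /mxact invg1 GL_1E mul1mx. Qed.

Lemma mxactM v : act_morph mxact v.
Proof. by move=> g h; rewrite /mxact invMg GL_MxE mulmxA. Qed.

Definition mxAct := TotalAction mxact1 mxactM.

Lemma mxact_fix v g : (mxact v g == v) = (GLval g *m v == v).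
Proof.
rewrite /mxact; apply/eqP/eqP => Ev; rewrite -{1}Ev mulmxA -GL_MxE.
  by rewrite mulgV GL_1E mul1mx.
by rewrite mulVg GL_1E mul1mx.
Qed.

Lemma orbit_mxAct (G : {group {'GL_2['Z_n]}}) v : orbit mxAct G v = Orb G v.
Proof.
apply/setP => w; apply/imsetP/imsetP => -[g Gg ->]; exists g^-1%g; rewrite ?groupV //.
by rewrite /= /mxact invgK.
Qed.

End AffineAction.

Lemma dvdn_indexg_card (gT : finGroupType) (G H K : {group gT}) :
  H \subset G -> K \subset G -> (#|H| %| #|K| -> #|G : K|%g %| #|G : H|%g)%N.
Proof.
move=> sHG sKG /dvdnP[k EK]; apply/dvdnP; exists k.
apply/eqP; rewrite -(eqn_pmul2l (cardG_gt0 H)) (Lagrange sHG) -(Lagrange sKG) EK.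
by rewrite mulnCA mulnA.
Qed.

Lemma leq_card_indexg (gT : finGroupType) (G H K : {group gT}) :
  H \subset G -> K \subset G -> (#|G : K|%g <= #|G : H|%g -> #|H| <= #|K|)%N.
Proof.
move=> sHG sKG leKH; rewrite -(leq_pmul2r (indexg_gt0 G H)) (Lagrange sHG).
by rewrite -(Lagrange sKG) leq_mul2l leKH orbT.
Qed.

Lemma pnat_leq_dvdn (p m k : nat) :
  prime p -> p.-nat m -> p.-nat k -> (m <= k -> m %| k)%N.
Proof.
move=> pp /p_natP[i ->] /p_natP[j ->].
by rewrite leq_exp2l ?prime_gt1 // => /dvdn_exp2l.
Qed.

Section Stabilizer.
Variables (n : nat) (G : {group {'GL_2['Z_n]}}).
Hypothesis sGU : G \subset Umat n.
Local Notation stab v := ('C_G[v | mxAct n])%G.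

Lemma Umat_of_G g : g \in G -> g \in Umat n.
Proof. exact: subsetP. Qed.

Lemma uscaleX g k : g \in G -> uscale (g ^+ k)%g = uscale g ^+ k.
Proof.
move=> Gg; elim: k => [|k IHk]; first by rewrite expg0 uscale1 expr0.
by rewrite expgS uscaleM ?Umat_of_G ?groupX // IHk exprS.
Qed.

Lemma ushiftX g k : g \in G -> uscale g = 1 -> ushift (g ^+ k)%g = k%:R * ushift g.
Proof.
move=> Gg g1; elim: k => [|k IHk]; first by rewrite expg0 ushift1 mul0r.
by rewrite expgS ushiftM ?Umat_of_G ?groupX // IHk g1 mul1r mulrSr mulrDl mul1r addrC.
Qed.

Lemma uscale_unit g : g \in G -> uscale g \is a GRing.unit.
Proof.
move=> Gg; have Gg' := groupVr Gg.
have ggV : uscale g * uscale g^-1%g = 1.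
  by rewrite -uscaleM ?Umat_of_G // mulgV uscale1.
by apply/unitrP; exists (uscale g^-1%g); rewrite mulrC ggV.
Qed.

Lemma mem_stab v g : v \in Svec n ->
  (g \in stab v) = (g \in G) && (uscale g * v i0 0 + ushift g == v i0 0).
Proof.
move=> Sv; rewrite in_setI; case Gg: (g \in G) => //=.
rewrite -mulmx_Svec ?Umat_of_G //; apply/astab1P/eqP => /= [/eqP | Ev].
  by rewrite mxact_fix => /eqP ->.
apply/eqP; rewrite mxact_fix; apply/eqP; apply: eq_Svec Ev => //.
exact: Svec_mulmx (Umat_of_G Gg) Sv.
Qed.

Lemma stab_uscale_inj v g h : v \in Svec n -> g \in stab v -> h \in stab v ->
  uscale g = uscale h -> g = h.
Proof.
move=> Sv; rewrite !mem_stab // => /andP[Gg /eqP Eg] /andP[Gh /eqP Eh] Ea.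
have Eb : ushift g = ushift h by apply: (addrI (uscale g * v i0 0)); rewrite Eg Ea Eh.
exact: eq_Umat (Umat_of_G Gg) (Umat_of_G Gh) Ea Eb.
Qed.

Lemma card_Orb v : #|Orb G v| = #|G : stab v|%g.
Proof. by rewrite -orbit_mxAct card_orbit. Qed.

End Stabilizer.

Section PrimePower.
Variables (p l : nat).
Hypotheses (pp : prime p) (l_gt0 : (0 < l)%N).
Local Notation n := (p ^ l)%N.

Lemma pexp_gt1 : (1 < n)%N.
Proof. by rewrite -(expn0 p) ltn_exp2l // prime_gt1. Qed.

Lemma nonunit_1mod (x : 'Z_n) : ~~ (x - 1 \is a GRing.unit) ->
  exists c, x = 1 + p%:R * c.
Proof.
move=> xU; exists ((val (x - 1)%R %/ p)%:R).
have p_dvd : (p %| val (x - 1)%R)%N.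
  move: xU; rewrite -{1}(natr_Zp (x - 1)) unitZpE ?pexp_gt1 // coprime_pexpl //.
  by rewrite prime_coprime // negbK.
by rewrite -natrM mulnC divnK // natr_Zp addrC subrK.
Qed.

Lemma expr_pexp_eq1 (x : 'Z_n) : ~~ (x - 1 \is a GRing.unit) -> x ^+ n = 1.
Proof.
move=> /nonunit_1mod[c /(exprpX_1mod l)[d ->]].
by rewrite expnS natrM pchar_Zp ?pexp_gt1 // mulr0 mul0r addr0.
Qed.

Variable G : {group {'GL_2['Z_n]}}.
Hypothesis sGU : G \subset Umat n.

Lemma stab_pgroup v : v \in Svec n ->
  (forall g, g \in G -> ~~ (uscale g - 1 \is a GRing.unit)) ->
  (p.-group 'C_G[v | mxAct n])%g.
Proof.
move=> Sv G1; rewrite -pnat_exponent (@pnat_dvd _ n) ?pnatX ?pnat_id //.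
apply/exponentP => h Ch; have Gh : h \in G by case/setIP: Ch.
apply: (stab_uscale_inj sGU Sv); rewrite ?groupX ?group1 //.
by rewrite (uscaleX sGU) // uscale1 expr_pexp_eq1 ?G1.
Qed.

End PrimePower.

Section FixedPoint.
Variables (n : nat) (G : {group {'GL_2['Z_n]}}).
Hypothesis sGU : G \subset Umat n.
Local Notation stab v := ('C_G[v | mxAct n])%G.
Variable g : {'GL_2['Z_n]}.
Hypotheses (Gg : g \in G) (g_unit1 : uscale g - 1 \is a GRing.unit).

Let a := uscale g.
Let b := ushift g.
Let u := (a - 1)^-1.

Definition fixpt : 'cV['Z_n]_2 := \col_i (if i == i1 then 1 else - u * b).

Lemma fixpt_Svec : fixpt \in Svec n.
Proof. by rewrite inE mxE eqxx. Qed.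

Let comm h := (g * h * g^-1 * h^-1)%g.

Let Gcomm h : h \in G -> comm h \in G.
Proof. by move=> Gh; rewrite !groupM ?groupV. Qed.

Lemma uscale_comm h : h \in G -> uscale (comm h) = 1.
Proof.
move=> Gh; have Et : (comm h * h * g = g * h)%g by rewrite /comm !mulgKV.
move: (comm h) (Gcomm Gh) Et => t Gt /(congr1 (@uscale n)).
rewrite !uscaleM ?(Umat_of_G sGU) ?groupM // => E.
have hgU : uscale h * uscale g \is a GRing.unit by rewrite unitrM !(uscale_unit sGU).
by apply: (mulIr hgU); rewrite mul1r mulrA E mulrC.
Qed.

Lemma ushift_comm h : h \in G ->
  ushift (comm h) = (a - 1) * ushift h - (uscale h - 1) * b.
Proof.
move=> Gh; have Et : (comm h * h * g = g * h)%g by rewrite /comm !mulgKV.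
move: (comm h) (Gcomm Gh) (uscale_comm Gh) Et => t Gt t1 /(congr1 (@ushift n)).
rewrite !ushiftM ?uscaleM ?(Umat_of_G sGU) ?groupM // t1 !mul1r => E.
by apply: (addrI (uscale h * ushift g + ushift h)); rewrite -addrA E /a /b; ring.
Qed.

(* [comm h] is a translation, and [val (- u)] is a natural representative of [- u]. *)
Let proj h := ((comm h) ^+ val (- u) * h)%g.

Let Gproj h : h \in G -> proj h \in G.
Proof. by move=> Gh; rewrite groupM ?groupX ?Gcomm. Qed.

Lemma uscale_proj h : h \in G -> uscale (proj h) = uscale h.
Proof.
move=> Gh; rewrite uscaleM ?(Umat_of_G sGU) ?groupX ?Gcomm //.
by rewrite (uscaleX sGU) ?Gcomm // uscale_comm // expr1n mul1r.
Qed.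

Lemma proj_stab h : h \in G -> proj h \in stab fixpt.
Proof.
move=> Gh; rewrite mem_stab ?fixpt_Svec // Gproj //= mxE /=.
rewrite uscale_proj // ushiftM ?(Umat_of_G sGU) ?groupX ?Gcomm //.
rewrite (ushiftX sGU) ?Gcomm ?uscale_comm // ushift_comm // natr_Zp (uscaleX sGU) ?Gcomm //.
rewrite uscale_comm // expr1n mul1r.
have ua : u * (a - 1) = 1 by apply: mulVr.
apply/eqP; transitivity (- u * b + ushift h * (1 - u * (a - 1))); first ring.
by rewrite ua subrr mulr0 addr0.
Qed.

Lemma card_stab_dvd_fixpt v : v \in Svec n -> (#|stab v| %| #|stab fixpt|)%N.
Proof.
move=> Sv.
have projM : {in G &, {morph proj : x y / (x * y)%g}}.
  move=> h k Gh Gk; apply: (stab_uscale_inj sGU fixpt_Svec).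
  - exact/proj_stab/groupM.
  - by rewrite groupM ?proj_stab.
  rewrite uscale_proj ?groupM // (uscaleM (Umat_of_G sGU (Gproj Gh)) (Umat_of_G sGU (Gproj Gk))).
  by rewrite !uscale_proj // uscaleM ?(Umat_of_G sGU).
pose f := Morphism projM.
have sSG : stab v \subset G by apply: subsetIl.
suff -> : #|stab v| = #|(f @* stab v)%g|.
  by apply/cardSg/subsetP => _ /morphimP[h Gh _ ->]; apply: proj_stab.
rewrite morphimE (setIidPr sSG) card_in_imset // => h k Sh Sk /= Ehk.
apply: (stab_uscale_inj sGU Sv Sh Sk).
by rewrite -uscale_proj ?(subsetP sSG) // Ehk uscale_proj ?(subsetP sSG).
Qed.

End FixedPoint.

Lemma card_stab_dvd_max (p l : nat) (G : {group {'GL_2['Z_(p ^ l)]}}) v w :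
  prime p -> (0 < l)%N -> G \subset Umat (p ^ l) ->
  v \in Svec (p ^ l) -> w \in Svec (p ^ l) ->
  (forall x, x \in Svec (p ^ l) ->
     #|'C_G[x | mxAct _]%G| <= #|'C_G[w | mxAct _]%G|)%N ->
  (#|'C_G[v | mxAct _]%G| %| #|'C_G[w | mxAct _]%G|)%N.
Proof.
move=> pp l_gt0 sGU Sv Sw maxw.
case: (pickP [pred g in G | uscale g - 1 \is a GRing.unit]) => [g /andP[Gg gU] | noU].
  have Ew : #|'C_G[w | mxAct _]%G| = #|'C_G[fixpt g | mxAct _]%G|.
    apply/eqP; rewrite eqn_leq maxw ?fixpt_Svec //.
    by rewrite dvdn_leq ?cardG_gt0 ?card_stab_dvd_fixpt.
  by rewrite Ew card_stab_dvd_fixpt.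
have nonU g : g \in G -> ~~ (uscale g - 1 \is a GRing.unit).
  by move=> Gg; move: (noU g); rewrite /= Gg /= => ->.
have pS x : x \in Svec (p ^ l) -> (p.-group 'C_G[x | mxAct _])%g.
  by move=> Sx; apply: stab_pgroup.
exact: pnat_leq_dvdn pp (pS v Sv) (pS w Sw) (maxw v Sv).
Qed.

Theorem lemma2p3 (p l : nat) (G : {group {'GL_2['Z_(p ^ l)]}}) :
  prime p -> (0 < l)%N -> G \subset Umat (p ^ l) ->
  forall v, v \in Svec (p ^ l) -> (lambda G %| #|Orb G v|)%N.
Proof.
move=> pp l_gt0 sGU v Sv.
have Se1 : e1 (p ^ l) \in Svec (p ^ l) by rewrite inE mxE eqxx.
rewrite /lambda; case: arg_minnP => // w Sw minw.
rewrite !card_Orb; apply: dvdn_indexg_card; rewrite ?subsetIl //.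
apply: card_stab_dvd_max => // x Sx.
by apply: (@leq_card_indexg _ G); rewrite ?subsetIl // -!card_Orb minw.
Qed.
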